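(* Let $S_1,S_2\in\mathbb S^{d\times d}$ and let $\Sigma_1,\Sigma_2$ be symmetric $d\times d$ matrices with $0\prec\sigma_{i,d}I_d\preceq\Sigma_i\preceq\sigma_{i,1}I_d$ for $i=1,2$. Then $$\langle\Sigma_1(S_1-S_2)\Sigma_2,S_1-S_2\rangle\ \ge\ \frac{\sigma_{1,1}\sigma_{2,1}\sigma_{1,d}\sigma_{2,d}}{\sigma_{1,1}\sigma_{2,1}+\sigma_{1,d}\sigma_{2,d}}\|S_1-S_2\|_F^2+\frac{\|\Sigma_1(S_1-S_2)\Sigma_2+\Sigma_2(S_1-S_2)\Sigma_1\|_F^2}{4(\sigma_{1,1}\sigma_{2,1}+\sigma_{1,d}\sigma_{2,d})}.$$
   Context: $\mathbb S^{d\times d}$ is the set of symmetric $d\times d$ matrices, $\langle A,B\rangle=\mathrm{tr}(A^{\mathrm T}B)$, $\|\cdot\|_F$ the Frobenius norm, and $A\preceq B$ means $B-A$ is positive semidefinite. *)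

From HB Require Import structures.
From mathcomp Require Import all_boot all_order all_algebra.
Set Implicit Arguments. Unset Strict Implicit. Unset Printing Implicit Defensive.
Import Order.TTheory GRing.Theory Num.Theory.
Local Open Scope ring_scope.

Definition is_sym_mx (R : pzRingType) (d : nat) (A : 'M[R]_d) : Prop := A^T = A.

Definition psd (R : realFieldType) (d : nat) (A : 'M[R]_d) : Prop :=
  is_sym_mx A /\ forall x : 'cV[R]_d, 0 <= (x^T *m A *m x) 0 0.

Definition loewner_le (R : realFieldType) (d : nat) (A B : 'M[R]_d) : Prop :=
  psd (B - A).

Definition frob_inner (R : pzRingType) (d : nat) (A B : 'M[R]_d) : R := \tr (A^T *m B).

Definition frob_norm2 (R : pzRingType) (d : nat) (A : 'M[R]_d) : R := frob_inner A A.

From HB Require Import structures.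
From mathcomp Require Import all_boot all_order all_algebra.
From mathcomp Require Import ring lra.
Import Order.TTheory GRing.Theory Num.Theory.
Local Open Scope ring_scope.

(* Write X = S1 - S2, A = Sig1 in [a, al] and B = Sig2 in [b, be] (Loewner order), and
   t(G, H) := tr(X^T G X H).  If G and H are positive semidefinite then t(G, H) >= 0: symmetric
   Gaussian elimination writes H as a nonnegative combination of rank-one matrices p p^T, and
   tr(K p p^T) = p^T K p.  The four quantities
     be t((A - a)(al - A), B),  t((A - a) A, B (be - B)),  a be t(al - A, B - b),
     a t(A, (B - b)(be - B))
   are therefore nonnegative (each product has commuting PSD factors), and they sum to
     (a b + al be) t(A, B) - a b al be ||X||^2 - t(A^2, B^2).
   With Y = A X B one has ||Y + Y^T||^2 <= 4 ||Y||^2 = 4 t(A^2, B^2), which gives the bound. *)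

Set Implicit Arguments. Unset Strict Implicit. Unset Printing Implicit Defensive.

Section Psd.
Variables (R : realFieldType) (d : nat).
Implicit Types (P Q H K : 'M[R]_d) (x y : 'cV[R]_d).

Definition qform P x y : R := (x^T *m P *m y) 0 0.

Lemma qformDl P x y z : qform P (x + y) z = qform P x z + qform P y z.
Proof. by rewrite /qform linearD /= !mulmxDl mxE. Qed.

Lemma qformDr P x y z : qform P z (x + y) = qform P z x + qform P z y.
Proof. by rewrite /qform !mulmxDr mxE. Qed.

Lemma qformZl P t x z : qform P (t *: x) z = t * qform P x z.
Proof. by rewrite /qform linearZ /= -!scalemxAl mxE. Qed.

Lemma qformZr P t x z : qform P z (t *: x) = t * qform P z x.
Proof. by rewrite /qform -!scalemxAr mxE. Qed.

Lemma qformD P Q x y : qform (P + Q) x y = qform P x y + qform Q x y.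
Proof. by rewrite /qform mulmxDr mulmxDl mxE. Qed.

Lemma qformN P x y : qform (- P) x y = - qform P x y.
Proof. by rewrite /qform mulmxN mulNmx mxE. Qed.

Lemma qformZ P t x y : qform (t *: P) x y = t * qform P x y.
Proof. by rewrite /qform -scalemxAr -scalemxAl mxE. Qed.

Lemma qformC P x y : is_sym_mx P -> qform P x y = qform P y x.
Proof.
move=> sP; rewrite /qform -[in LHS](trmxK (x^T *m P *m y)) mxE.
by rewrite !trmx_mul trmxK sP mulmxA.
Qed.

Lemma qform_delta P i j : qform P (delta_mx i 0) (delta_mx j 0) = P i j.
Proof. by rewrite /qform trmx_delta -rowE -colE !mxE. Qed.

Lemma qform_congr P Q x y : qform (Q^T *m P *m Q) x y = qform P (Q *m x) (Q *m y).
Proof. by rewrite /qform trmx_mul !mulmxA. Qed.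

Lemma qform_expand P x y t : is_sym_mx P ->
  qform P (x + t *: y) (x + t *: y) =
  qform P x x + 2 * t * qform P x y + t ^+ 2 * qform P y y.
Proof. by move=> sP; rewrite !qformDl !qformDr !qformZl !qformZr (qformC x y sP); ring. Qed.

Lemma qform_outer p x : qform (p *m p^T) x x = qform 1%:M p x ^+ 2.
Proof.
rewrite /qform mulmx1.
have -> : x^T *m (p *m p^T) *m x = (x^T *m p) *m (p^T *m x) by rewrite !mulmxA.
rewrite mxE big_ord1 expr2.
by congr (_ * _); rewrite -[in LHS](trmxK (x^T *m p)) mxE trmx_mul trmxK.
Qed.

Lemma mxtrace_mul_outer K p : \tr (K *m (p *m p^T)) = qform K p p.
Proof. by rewrite mulmxA mxtrace_mulC /mxtrace big_ord1 /qform mulmxA. Qed.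

Lemma sym_mxE P i j : is_sym_mx P -> P i j = P j i.
Proof. by move=> sP; rewrite -{1}sP mxE. Qed.

Lemma psd_diag_ge0 H i : psd H -> 0 <= H i i.
Proof. by move=> [_ hH]; have := hH (delta_mx i 0); rewrite -/(qform _ _ _) qform_delta. Qed.

Lemma psd_diag0_row0 H i j : psd H -> H i i = 0 -> H i j = 0.
Proof.
move=> [sH hH] Hii0.
have line t : 0 <= H j j + 2 * t * H i j.
  have := hH (delta_mx j 0 + t *: delta_mx i 0).
  by rewrite -/(qform _ _ _) qform_expand // !qform_delta Hii0 (sym_mxE _ _ sH) mulr0 addr0.
apply/eqP/negP => /negP Hij0.
have := line (- (H j j + 1) / (2 * H i j)).
have -> : H j j + 2 * (- (H j j + 1) / (2 * H i j)) * H i j = -1 by field.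
lra.
Qed.

Definition pivot_mx H k : 'M[R]_d := H - (H k k)^-1 *: (col k H *m (col k H)^T).

Lemma pivot_mxE H k i j : is_sym_mx H ->
  pivot_mx H k i j = H i j - (H k k)^-1 * (H i k * H k j).
Proof. by move=> sH; rewrite !mxE big_ord1 !mxE (sym_mxE j k sH). Qed.

Lemma psd_pivot_mx H k : psd H -> 0 < H k k -> psd (pivot_mx H k).
Proof.
move=> [sH hH] Hkk_gt0; set c := H k k; set p := col k H.
split; first by rewrite /is_sym_mx linearB /= linearZ /= trmx_mul trmxK sH.
move=> x; rewrite -/(qform _ _ _) qformD qformN qformZ qform_outer.
have -> : qform 1%:M p x = qform H (delta_mx k 0) x.
  by rewrite /qform /p colE trmx_mul sH mulmx1.
set s := qform H (delta_mx k 0) x.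
have := hH (x + (- s / c) *: delta_mx k 0).
rewrite -/(qform _ _ _) qform_expand // qform_delta (qformC _ _ sH) -/s -/c.
have -> : qform H x x + 2 * (- s / c) * s + (- s / c) ^+ 2 * c = qform H x x - c^-1 * s ^+ 2.
  by field; rewrite gt_eqF.
done.
Qed.

Lemma pivot_mx_diag_support H k : psd H -> 0 < H k k ->
  [set i | pivot_mx H k i i != 0] \subset [set i | H i i != 0] :\ k.
Proof.
move=> pH Hkk_gt0; apply/subsetP => i; rewrite !inE pivot_mxE; last exact: pH.1.
have [->|ik] := eqVneq i k; first by rewrite mulKf ?subrr ?eqxx // gt_eqF.
apply: contraNN => /eqP Hii0.
by rewrite Hii0 (psd_diag0_row0 _ pH Hii0) mul0r mulr0 subr0.
Qed.

Lemma mxtrace_psd_mul_ge0 K H : psd K -> psd H -> 0 <= \tr (K *m H).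
Proof.
move=> pK; have [n] := ubnP #|[set i | H i i != 0]|.
elim: n H => // n IH H supp_lt pH.
have [supp0 | /set0Pn [k]] := eqVneq [set i | H i i != 0] set0.
  have -> : H = 0.
    apply/matrixP => i j; rewrite mxE; apply: psd_diag0_row0 => //.
    by apply/eqP; have /setP/(_ i) := supp0; rewrite !inE => /negbFE.
  by rewrite mulmx0 mxtrace0.
rewrite inE => Hkk0.
have Hkk_gt0 : 0 < H k k by rewrite lt_def Hkk0 psd_diag_ge0.
have -> : H = pivot_mx H k + (H k k)^-1 *: (col k H *m (col k H)^T) by rewrite subrK.
rewrite mulmxDr mxtraceD -scalemxAr mxtraceZ mxtrace_mul_outer.
apply: addr_ge0; last by apply: mulr_ge0; [rewrite invr_ge0 ltW | exact: pK.2].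
apply: IH; last exact: psd_pivot_mx.
rewrite -ltnS; apply: leq_trans supp_lt; rewrite ltnS.
apply: leq_ltn_trans (subset_leq_card (pivot_mx_diag_support pH Hkk_gt0)) _.
by rewrite (cardsD1 k [set i | H i i != 0]) inE Hkk0.
Qed.

Lemma psdD P Q : psd P -> psd Q -> psd (P + Q).
Proof.
move=> [sP hP] [sQ hQ]; split; first by rewrite /is_sym_mx linearD /= sP sQ.
by move=> x; rewrite -/(qform _ _ _) qformD addr_ge0 //; [apply: hP | apply: hQ].
Qed.

Lemma psdZ t P : 0 <= t -> psd P -> psd (t *: P).
Proof.
move=> t_ge0 [sP hP]; split; first by rewrite /is_sym_mx linearZ /= sP.
by move=> x; rewrite -/(qform _ _ _) qformZ mulr_ge0 //; apply: hP.
Qed.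

Lemma psd_congr P Q : psd P -> psd (Q^T *m P *m Q).
Proof.
move=> [sP hP]; split; first by rewrite /is_sym_mx !trmx_mul trmxK sP mulmxA.
by move=> x; rewrite -/(qform _ _ _) qform_congr; apply: hP.
Qed.

Lemma psd1 : psd (1%:M : 'M[R]_d).
Proof.
split=> [|x]; first by rewrite /is_sym_mx trmx1.
by rewrite mulmx1 mxE; apply: sumr_ge0 => i _; rewrite mxE -expr2 sqr_ge0.
Qed.

Lemma psd_trmx_mul Q : psd (Q^T *m Q).
Proof. by have := psd_congr Q psd1; rewrite mulmx1. Qed.

Lemma psd_anti P : psd P -> psd (- P) -> P = 0.
Proof.
move=> [sP hP] [_ hN].
have qP0 x : qform P x x = 0.
  apply/eqP; rewrite eq_le hP andbT.
  by have := hN x; rewrite -/(qform _ _ _) qformN oppr_ge0.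
apply/matrixP => i j; rewrite mxE -qform_delta.
have := qform_expand (delta_mx i 0) (delta_mx j 0) 1 sP.
by rewrite scale1r !qP0; lra.
Qed.

(* [P] and [c - P] commute, and [c P (c - P) = (c - P) P (c - P) + P (c - P) P]. *)
Lemma psd_mul_compl c P : 0 <= c -> psd P -> psd (c%:M - P) -> psd (P *m (c%:M - P)).
Proof.
rewrite le_eqVlt => /orP [/eqP <- | c_gt0] pP pQ.
  have P0 : P = 0 by apply: psd_anti; rewrite // -sub0r -(raddf0 (@scalar_mx R d)).
  by rewrite P0 mul0mx -(scale0r 1%:M); apply: psdZ; [exact: lexx | exact: psd1].
have -> : P *m (c%:M - P) =
    c^-1 *: ((c%:M - P)^T *m P *m (c%:M - P) + P^T *m (c%:M - P) *m P).
  have cPE : (c%:M - P) *m P = P *m (c%:M - P).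
    by rewrite mulmxBl mulmxBr mul_scalar_mx mul_mx_scalar.
  rewrite pP.1 pQ.1 cPE -mulmxDr subrK mul_mx_scalar scalerA mulVf ?scale1r //.
  by rewrite gt_eqF.
by apply: psdZ; rewrite ?invr_ge0 ?ltW //; apply: psdD; apply: psd_congr.
Qed.

Lemma loewner_le_trans P Q H : loewner_le P Q -> loewner_le Q H -> loewner_le P H.
Proof. by move=> lPQ lQH; have := psdD lQH lPQ; rewrite /loewner_le addrA subrK. Qed.

Lemma psd_loewner_scalar a P : 0 <= a -> loewner_le a%:M P -> psd P.
Proof.
by move=> a_ge0 laP; have := psdD laP (psdZ a_ge0 psd1); rewrite scalemx1 subrK.
Qed.

Lemma loewner_le_scalar a b : (0 < d)%N -> loewner_le (a%:M : 'M[R]_d) b%:M -> a <= b.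
Proof.
move=> d_gt0 /(psd_diag_ge0 (Ordinal d_gt0)).
by rewrite !mxE eqxx !mulr1n subr_ge0.
Qed.

Lemma psd_mul_interval a b P : a <= b -> loewner_le a%:M P -> loewner_le P b%:M ->
  psd ((P - a%:M) *m (b%:M - P)).
Proof.
move=> le_ab laP lPb.
have := @psd_mul_compl (b - a) _ _ laP; rewrite subr_ge0 => /(_ le_ab).
suff -> : (b - a)%:M - (P - a%:M) = b%:M - P by move/(_ lPb).
by rewrite raddfB /= opprB addrA subrK.
Qed.

Lemma psd_mul_lower a P : 0 <= a -> loewner_le a%:M P -> psd ((P - a%:M) *m P).
Proof.
move=> a_ge0 laP.
have -> : (P - a%:M) *m P = (P - a%:M)^T *m (P - a%:M) + a *: (P - a%:M).
  by rewrite laP.1 mulmxBr mul_mx_scalar subrK.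
by apply: psdD; [apply: psd_trmx_mul | apply: psdZ].
Qed.
End Psd.

Lemma mulmx_shift (R : comPzRingType) d (A : 'M[R]_d) a c :
  (A - a%:M) *m (c%:M - A) = (a + c) *: A - A *m A - (a * c) *: 1%:M.
Proof.
rewrite mulmxBl !mulmxBr mul_mx_scalar !mul_scalar_mx.
by apply/matrixP => i j; rewrite !mxE; case: (i == j) => /=; ring.
Qed.

Section SandwichTrace.
Variables (R : realFieldType) (d : nat) (X : 'M[R]_d).
Implicit Types (A B G H : 'M[R]_d).

Definition sandwich_tr G H : R := \tr (X^T *m G *m X *m H).

Lemma sandwich_trDl G1 G2 H : sandwich_tr (G1 + G2) H = sandwich_tr G1 H + sandwich_tr G2 H.
Proof. by rewrite /sandwich_tr mulmxDr !mulmxDl mxtraceD. Qed.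

Lemma sandwich_trNl G H : sandwich_tr (- G) H = - sandwich_tr G H.
Proof. by rewrite /sandwich_tr mulmxN !mulNmx linearN. Qed.

Lemma sandwich_trZl t G H : sandwich_tr (t *: G) H = t * sandwich_tr G H.
Proof. by rewrite /sandwich_tr -scalemxAr -!scalemxAl mxtraceZ. Qed.

Lemma sandwich_trDr G H1 H2 : sandwich_tr G (H1 + H2) = sandwich_tr G H1 + sandwich_tr G H2.
Proof. by rewrite /sandwich_tr mulmxDr mxtraceD. Qed.

Lemma sandwich_trNr G H : sandwich_tr G (- H) = - sandwich_tr G H.
Proof. by rewrite /sandwich_tr mulmxN linearN. Qed.

Lemma sandwich_trZr t G H : sandwich_tr G (t *: H) = t * sandwich_tr G H.
Proof. by rewrite /sandwich_tr -scalemxAr mxtraceZ. Qed.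

Lemma sandwich_tr_ge0 G H : psd G -> psd H -> 0 <= sandwich_tr G H.
Proof. by move=> pG pH; apply: mxtrace_psd_mul_ge0 => //; apply: psd_congr. Qed.

Lemma sandwich_tr_interval_identity a al b be A B :
  be * sandwich_tr ((A - a%:M) *m (al%:M - A)) B
  + sandwich_tr ((A - a%:M) *m A) (B *m (be%:M - B))
  + a * be * sandwich_tr (al%:M - A) (B - b%:M)
  + a * sandwich_tr A ((B - b%:M) *m (be%:M - B))
  = (a * b + al * be) * sandwich_tr A B - a * b * al * be * sandwich_tr 1%:M 1%:M
    - sandwich_tr (A *m A) (B *m B).
Proof.
rewrite !mulmx_shift mulmxBl mulmxBr mul_scalar_mx mul_mx_scalar.
rewrite -[al%:M]scalemx1 -[b%:M]scalemx1.
rewrite !(sandwich_trDl, sandwich_trNl, sandwich_trZl).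
rewrite !(sandwich_trDr, sandwich_trNr, sandwich_trZr).
ring.
Qed.

Lemma sandwich_tr_interval_le a al b be A B : 0 <= a -> 0 <= b -> a <= al -> b <= be ->
  loewner_le a%:M A -> loewner_le A al%:M -> loewner_le b%:M B -> loewner_le B be%:M ->
  a * b * al * be * sandwich_tr 1%:M 1%:M + sandwich_tr (A *m A) (B *m B)
    <= (a * b + al * be) * sandwich_tr A B.
Proof.
move=> a_ge0 b_ge0 le_a_al le_b_be laA lAal lbB lBbe.
have pA := psd_loewner_scalar a_ge0 laA.
have pB := psd_loewner_scalar b_ge0 lbB.
have be_ge0 : 0 <= be by apply: le_trans le_b_be.
rewrite -subr_ge0 opprD addrA -sandwich_tr_interval_identity.
apply: addr_ge0; first apply: addr_ge0; first apply: addr_ge0.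
- by apply/mulr_ge0/sandwich_tr_ge0/pB/psd_mul_interval.
- by apply: sandwich_tr_ge0; [exact: psd_mul_lower | exact: psd_mul_compl].
- by apply/mulr_ge0/sandwich_tr_ge0/lbB/lAal; apply: mulr_ge0.
- by apply/mulr_ge0/sandwich_tr_ge0/psd_mul_interval/lBbe/lbB.
Qed.
End SandwichTrace.

Section Frobenius.
Variables (R : realFieldType) (d : nat).
Implicit Types (A B X Y : 'M[R]_d).

Lemma is_sym_mxB A B : is_sym_mx A -> is_sym_mx B -> is_sym_mx (A - B).
Proof. by move=> sA sB; rewrite /is_sym_mx linearB /= sA sB. Qed.

Lemma frob_norm2_ge0 A : 0 <= frob_norm2 A.
Proof.
rewrite /frob_norm2 /frob_inner -[_ *m _]mul1mx.
by apply: mxtrace_psd_mul_ge0; [exact: psd1 | exact: psd_trmx_mul].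
Qed.

Lemma frob_norm2_add_tr_le Y : frob_norm2 (Y + Y^T) <= 4 * \tr (Y^T *m Y).
Proof.
have trD : (Y + Y^T)^T = Y^T + Y by apply/matrixP => i j; rewrite !mxE addrC.
have trB : (Y - Y^T)^T = - Y + Y^T by apply/matrixP => i j; rewrite !mxE addrC.
have := frob_norm2_ge0 (Y - Y^T); rewrite /frob_norm2 /frob_inner trD trB.
rewrite !mulmxDl !mulmxDr !mulNmx !mulmxN !mxtraceD !raddfN /= (mxtrace_mulC Y Y^T).
lra.
Qed.

Lemma frob_norm2_sandwich X : frob_norm2 X = sandwich_tr X 1%:M 1%:M.
Proof. by rewrite /sandwich_tr !mulmx1. Qed.

Lemma frob_inner_sandwich A B X : is_sym_mx A -> is_sym_mx B -> is_sym_mx X ->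
  frob_inner (A *m X *m B) X = sandwich_tr X A B.
Proof.
move=> sA sB sX; rewrite /frob_inner /sandwich_tr !trmx_mul sX sA sB.
by rewrite mxtrace_mulC !mulmxA [LHS]mxtrace_mulC !mulmxA [LHS]mxtrace_mulC !mulmxA.
Qed.

Lemma mxtrace_sandwich_sq A B X : is_sym_mx A -> is_sym_mx B -> is_sym_mx X ->
  \tr ((A *m X *m B)^T *m (A *m X *m B)) = sandwich_tr X (A *m A) (B *m B).
Proof.
move=> sA sB sX; rewrite /sandwich_tr !trmx_mul sX sA sB !mulmxA [LHS]mxtrace_mulC !mulmxA.
by have := mxtrace_mulC (B *m B) (X *m A *m A *m X); rewrite !mulmxA.
Qed.
End Frobenius.

Theorem lemmaE (R : realFieldType) (d : nat)
  (S1 S2 Sig1 Sig2 : 'M[R]_d) (s11 s1d s21 s2d : R) :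
  is_sym_mx S1 -> is_sym_mx S2 ->
  is_sym_mx Sig1 -> is_sym_mx Sig2 ->
  0 < s1d -> 0 < s2d ->
  loewner_le (s1d%:M) Sig1 -> loewner_le Sig1 (s11%:M) ->
  loewner_le (s2d%:M) Sig2 -> loewner_le Sig2 (s21%:M) ->
  frob_inner (Sig1 *m (S1 - S2) *m Sig2) (S1 - S2) >=
    (s11 * s21 * s1d * s2d) / (s11 * s21 + s1d * s2d) * frob_norm2 (S1 - S2)
    + frob_norm2 (Sig1 *m (S1 - S2) *m Sig2 + Sig2 *m (S1 - S2) *m Sig1)
      / (4 * (s11 * s21 + s1d * s2d)).
Proof.
move=> sS1 sS2 sSig1 sSig2 s1d_gt0 s2d_gt0 l1 l2 l3 l4.
have [d0|d_gt0] := posnP d.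
  by subst d; rewrite /frob_norm2 /frob_inner /mxtrace !big_ord0 mulr0 mul0r addr0.
set X := S1 - S2; have sX : is_sym_mx X by exact: is_sym_mxB.
have le_s1 := loewner_le_scalar d_gt0 (loewner_le_trans l1 l2).
have le_s2 := loewner_le_scalar d_gt0 (loewner_le_trans l3 l4).
have key := sandwich_tr_interval_le X (ltW s1d_gt0) (ltW s2d_gt0) le_s1 le_s2 l1 l2 l3 l4.
have sym_norm := frob_norm2_add_tr_le (Sig1 *m X *m Sig2).
have trY : (Sig1 *m X *m Sig2)^T = Sig2 *m X *m Sig1 by rewrite !trmx_mul sSig1 sSig2 sX mulmxA.
rewrite mxtrace_sandwich_sq // trY in sym_norm.
rewrite frob_inner_sandwich // frob_norm2_sandwich.
have D_gt0 : 0 < s11 * s21 + s1d * s2d.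
  have s11_gt0 := lt_le_trans s1d_gt0 le_s1; have s21_gt0 := lt_le_trans s2d_gt0 le_s2.
  by rewrite addr_gt0 ?mulr_gt0.
set n0 := sandwich_tr X 1%:M 1%:M; set N := frob_norm2 _.
have -> : s11 * s21 * s1d * s2d / (s11 * s21 + s1d * s2d) * n0 + N / (4 * (s11 * s21 + s1d * s2d))
    = (s11 * s21 * s1d * s2d * n0 + N / 4) / (s11 * s21 + s1d * s2d).
  by field; rewrite gt_eqF.
rewrite ler_pdivrMr //; lra.
Qed.
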